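(* Let $v\ge2$ and $M,N\in{\cal I}_v$ with $N=N_1+N_2$, where $N_1=\beta M$ for some $\beta\in\mathbb R$ and $M\perp N_2$ with respect to $(x,y):=\mathrm{Re}(xy^* )$. Then $$\{e^M,e^N\}=2(\cos|M|)\,e^N+2\,\frac{\sin|M|}{|M|}\,M\Big(\cos|N|+\frac{\sin|N|}{|N|}N_1\Big).$$
   Context: ${\cal A}_v$ is the real Cayley-Dickson algebra of dimension $2^v$, $z^*$ its conjugation, $\mathrm{Re}(z)=(z+z^* )/2$, $|z|=(zz^* )^{1/2}$, ${\cal I}_v=\{z:\mathrm{Re}(z)=0\}$. For $M\in{\cal I}_v$, $e^M=\cos|M|+\frac{\sin|M|}{|M|}M$ (with $\frac{\sin|M|}{|M|}:=1$ when $M=0$). $\{a,b\}:=ab+ba$ is the anticommutator. *)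

From Stdlib Require Import Reals.
Open Scope R_scope.

(* Real Cayley-Dickson algebra A_v of dimension 2^v:
   A_0 = R, A_{v+1} = A_v x A_v with
   (a,b)(c,d) = (ac - conj(d) b, da + b conj(c)),  conj(a,b) = (conj a, -b). *)
Fixpoint CD (v : nat) : Type :=
  match v with O => R | S n => (CD n * CD n)%type end.

Fixpoint cd_real (v : nat) : R -> CD v :=
  match v return R -> CD v with
  | O => fun r => r
  | S n => fun r => (cd_real n r, cd_real n 0)
  end.

Definition cd_zero (v : nat) : CD v := cd_real v 0.

Fixpoint cd_add (v : nat) : CD v -> CD v -> CD v :=
  match v return CD v -> CD v -> CD v with
  | O => fun x y => x + y
  | S n => fun x y => (cd_add n (fst x) (fst y), cd_add n (snd x) (snd y))
  end.

Fixpoint cd_opp (v : nat) : CD v -> CD v :=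
  match v return CD v -> CD v with
  | O => fun x => - x
  | S n => fun x => (cd_opp n (fst x), cd_opp n (snd x))
  end.

Definition cd_sub (v : nat) (x y : CD v) : CD v := cd_add v x (cd_opp v y).

Fixpoint cd_scal (v : nat) : R -> CD v -> CD v :=
  match v return R -> CD v -> CD v with
  | O => fun r x => r * x
  | S n => fun r x => (cd_scal n r (fst x), cd_scal n r (snd x))
  end.

Fixpoint cd_conj (v : nat) : CD v -> CD v :=
  match v return CD v -> CD v with
  | O => fun x => x
  | S n => fun x => (cd_conj n (fst x), cd_opp n (snd x))
  end.

Fixpoint cd_mul (v : nat) : CD v -> CD v -> CD v :=
  match v return CD v -> CD v -> CD v with
  | O => fun x y => x * y
  | S n => fun x y =>
      let a := fst x in let b := snd x in let c := fst y in let d := snd y in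
      (cd_sub n (cd_mul n a c) (cd_mul n (cd_conj n d) b),
       cd_add n (cd_mul n d a) (cd_mul n b (cd_conj n c)))
  end.

Definition cd_Re (v : nat) (z : CD v) : CD v :=
  cd_scal v (/ 2) (cd_add v z (cd_conj v z)).

Fixpoint cd_re0 (v : nat) : CD v -> R :=
  match v return CD v -> R with
  | O => fun x => x
  | S n => fun x => cd_re0 n (fst x)
  end.

(* |z| = (z z^* )^{1/2}; z z^* is real, we take the square root of its
   real coordinate *)
Definition cd_norm (v : nat) (z : CD v) : R :=
  sqrt (cd_re0 v (cd_mul v z (cd_conj v z))).

Definition cd_inner (v : nat) (x y : CD v) : CD v :=
  cd_Re v (cd_mul v x (cd_conj v y)).

Definition cd_imag (v : nat) (z : CD v) : Prop := cd_Re v z = cd_zero v.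

Definition sinc (r : R) : R := if Req_EM_T r 0 then 1 else sin r / r.

Definition cd_exp (v : nat) (M : CD v) : CD v :=
  cd_add v (cd_real v (cos (cd_norm v M))) (cd_scal v (sinc (cd_norm v M)) M).

Definition cd_anticomm (v : nat) (a b : CD v) : CD v :=
  cd_add v (cd_mul v a b) (cd_mul v b a).

(** The identity is linear in the scalars [cos] and [sinc]: expanding both
    exponentials, [{e^M, e^N}] equals [2 cos|M| e^N + 2 sinc|M| cos|N| M]
    plus [sinc|M| sinc|N| {M, N}], and [{M, N} = 2 beta M^2 + {M, N2}].
    For purely imaginary [x], [y] one has [(x, y) = -{x, y}/2], so the
    orthogonality of [M] and [N2] (the latter imaginary because [N] and
    [N1 = beta M] are) makes them anticommute, and what is left is
    [2 sinc|M| sinc|N| M N1].  No property of the norm is used, and the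
    identity holds in every [A_v]. *)

From Stdlib Require Import Reals Lra.
Open Scope R_scope.

(* On [CD v] only the first [2^v] indices matter; larger ones wrap around. *)
Fixpoint coord (v : nat) : CD v -> nat -> R :=
  match v return CD v -> nat -> R with
  | O => fun x _ => x
  | S n => fun x i => if Nat.even i then coord n (fst x) (Nat.div2 i)
                      else coord n (snd x) (Nat.div2 i)
  end.

Lemma cd_ext v : forall x y : CD v, (forall i, coord v x i = coord v y i) -> x = y.
Proof.
  induction v as [|n IH]; simpl.
  - intros x y H; exact (H O).
  - intros [x1 x2] [y1 y2] H; simpl in H; f_equal; apply IH; intro k.
    + specialize (H (2 * k)%nat).
      rewrite Nat.even_mul, Nat.div2_double in H; exact H.
    + specialize (H (S (2 * k))%nat).
      rewrite Nat.even_succ, Nat.odd_mul, Nat.div2_succ_double in H; exact H.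
Qed.

Lemma coord_add v : forall x y i, coord v (cd_add v x y) i = coord v x i + coord v y i.
Proof. induction v; simpl; auto; intros; destruct (Nat.even i); apply IHv. Qed.

Lemma coord_opp v : forall x i, coord v (cd_opp v x) i = - coord v x i.
Proof. induction v; simpl; auto; intros; destruct (Nat.even i); apply IHv. Qed.

Lemma coord_scal v : forall r x i, coord v (cd_scal v r x) i = r * coord v x i.
Proof. induction v; simpl; auto; intros; destruct (Nat.even i); apply IHv. Qed.

Lemma coord_sub v : forall x y i, coord v (cd_sub v x y) i = coord v x i - coord v y i.
Proof. intros; unfold cd_sub; rewrite coord_add, coord_opp; ring. Qed.

Lemma coord_real v : forall r i, coord v (cd_real v r) i = r * coord v (cd_real v 1) i.
Proof.
  induction v; simpl; intros; [ring|].
  destruct (Nat.even i); [apply IHv | rewrite (IHv 0); ring].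
Qed.

Lemma coord_zero v : forall i, coord v (cd_zero v) i = 0.
Proof. intros; unfold cd_zero; rewrite coord_real; ring. Qed.

(* Proves an identity of [CD v] that only uses the real vector space
   structure, by comparing coordinates with [ring]. *)
Ltac cd_linear :=
  apply cd_ext; intro i;
  repeat rewrite ?coord_add, ?coord_opp, ?coord_scal, ?coord_sub, ?coord_zero;
  repeat match goal with |- context [coord ?w (cd_real ?w ?r) ?j] =>
    assert_fails (constr_eq r 1); rewrite (coord_real w r j) end;
  ring.

Lemma cd_conj_add v : forall x y,
  cd_conj v (cd_add v x y) = cd_add v (cd_conj v x) (cd_conj v y).
Proof. induction v; simpl; auto; intros; f_equal; auto; cd_linear. Qed.

Lemma cd_conj_opp v : forall x, cd_conj v (cd_opp v x) = cd_opp v (cd_conj v x).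
Proof. induction v; simpl; auto; intros; f_equal; auto. Qed.

Lemma cd_conj_scal v : forall r x, cd_conj v (cd_scal v r x) = cd_scal v r (cd_conj v x).
Proof. induction v; simpl; auto; intros; f_equal; auto; cd_linear. Qed.

Lemma cd_conj_sub v : forall x y,
  cd_conj v (cd_sub v x y) = cd_sub v (cd_conj v x) (cd_conj v y).
Proof. intros; unfold cd_sub; rewrite cd_conj_add, cd_conj_opp; auto. Qed.

Lemma cd_conj_real v : forall r, cd_conj v (cd_real v r) = cd_real v r.
Proof. induction v; simpl; auto; intros; f_equal; auto; cd_linear. Qed.

Lemma cd_conjK v : forall x, cd_conj v (cd_conj v x) = x.
Proof. induction v; simpl; auto; intros [a b]; simpl; f_equal; auto; cd_linear. Qed.

Lemma cd_opp_scal v : forall x, cd_opp v x = cd_scal v (-1) x.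
Proof. intros; cd_linear. Qed.

Lemma cd_mul_add v :
  (forall x y z, cd_mul v (cd_add v x y) z = cd_add v (cd_mul v x z) (cd_mul v y z)) /\
  (forall x y z, cd_mul v x (cd_add v y z) = cd_add v (cd_mul v x y) (cd_mul v x z)).
Proof.
  induction v as [|n [L R]]; simpl.
  - split; intros; ring.
  - split; intros [x1 x2] [y1 y2] [z1 z2]; simpl; f_equal;
      rewrite ?L, ?R, ?cd_conj_add, ?L, ?R; cd_linear.
Qed.

Definition cd_mul_addl v := proj1 (cd_mul_add v).
Definition cd_mul_addr v := proj2 (cd_mul_add v).

Lemma cd_mul_scal v :
  (forall r x y, cd_mul v (cd_scal v r x) y = cd_scal v r (cd_mul v x y)) /\
  (forall r x y, cd_mul v x (cd_scal v r y) = cd_scal v r (cd_mul v x y)).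
Proof.
  induction v as [|n [L R]]; simpl.
  - split; intros; ring.
  - split; intros r [x1 x2] [y1 y2]; simpl; f_equal;
      rewrite ?L, ?R, ?cd_conj_scal, ?L, ?R; cd_linear.
Qed.

Definition cd_mul_scall v := proj1 (cd_mul_scal v).
Definition cd_mul_scalr v := proj2 (cd_mul_scal v).

Lemma cd_mul_real v :
  (forall r x, cd_mul v (cd_real v r) x = cd_scal v r x) /\
  (forall r x, cd_mul v x (cd_real v r) = cd_scal v r x).
Proof.
  induction v as [|n [L R]]; simpl.
  - split; intros; ring.
  - split; intros r [x1 x2]; simpl; f_equal;
      rewrite ?L, ?R, ?cd_conj_real, ?L, ?R; cd_linear.
Qed.

Definition cd_mul_reall v := proj1 (cd_mul_real v).
Definition cd_mul_realr v := proj2 (cd_mul_real v).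

Lemma cd_conj_mul v : forall x y,
  cd_conj v (cd_mul v x y) = cd_mul v (cd_conj v y) (cd_conj v x).
Proof.
  induction v as [|n IH]; simpl.
  - intros; ring.
  - intros [a b] [c d]; simpl; f_equal.
    + rewrite cd_conj_sub, !IH, cd_conjK, !cd_opp_scal, ?cd_conj_scal,
        ?cd_mul_scall, ?cd_mul_scalr.
      cd_linear.
    + rewrite ?cd_conj_add, ?IH, ?cd_conjK, !cd_opp_scal, ?cd_conj_scal,
        ?cd_mul_scall, ?cd_mul_scalr, ?cd_conjK.
      cd_linear.
Qed.

Lemma cd_imagP v z : cd_imag v z <-> cd_conj v z = cd_opp v z.
Proof.
  unfold cd_imag, cd_Re; split; intro H.
  - apply cd_ext; intro i.
    apply (f_equal (fun w => coord v w i)) in H.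
    rewrite coord_scal, coord_add, coord_zero in H.
    rewrite coord_opp; lra.
  - rewrite H; cd_linear.
Qed.

Lemma cd_imag_scal v r z : cd_imag v z -> cd_imag v (cd_scal v r z).
Proof. rewrite !cd_imagP, cd_conj_scal; intros ->; cd_linear. Qed.

Lemma cd_imag_addr v x y :
  cd_imag v x -> cd_imag v (cd_add v x y) -> cd_imag v y.
Proof.
  rewrite !cd_imagP, cd_conj_add; intros Hx Hxy; rewrite Hx in Hxy.
  apply cd_ext; intro i.
  apply (f_equal (fun w => coord v w i)) in Hxy.
  repeat rewrite ?coord_add, ?coord_opp in Hxy.
  rewrite coord_opp; lra.
Qed.

Lemma cd_inner_imag v x y : cd_imag v x -> cd_imag v y ->
  cd_inner v x y = cd_scal v (- / 2) (cd_anticomm v x y).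
Proof.
  rewrite !cd_imagP; intros Hx Hy.
  unfold cd_inner, cd_Re, cd_anticomm.
  rewrite cd_conj_mul, cd_conjK, Hx, Hy, !cd_opp_scal, ?cd_mul_scall, ?cd_mul_scalr.
  cd_linear.
Qed.

Lemma cd_anticomm_orthogonal v x y : cd_imag v x -> cd_imag v y ->
  cd_inner v x y = cd_zero v -> cd_anticomm v x y = cd_zero v.
Proof.
  intros Hx Hy Hxy; rewrite cd_inner_imag in Hxy by assumption.
  apply cd_ext; intro i.
  apply (f_equal (fun w => coord v w i)) in Hxy.
  rewrite coord_scal, coord_zero in Hxy; rewrite coord_zero; lra.
Qed.

Lemma cd_anticomm_affine v (a s c t beta : R) (M N1 N2 : CD v) :
  N1 = cd_scal v beta M -> cd_anticomm v M N2 = cd_zero v ->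
  cd_anticomm v (cd_add v (cd_real v a) (cd_scal v s M))
                (cd_add v (cd_real v c) (cd_scal v t (cd_add v N1 N2))) =
  cd_add v
    (cd_scal v (2 * a) (cd_add v (cd_real v c) (cd_scal v t (cd_add v N1 N2))))
    (cd_scal v (2 * s) (cd_mul v M (cd_add v (cd_real v c) (cd_scal v t N1)))).
Proof.
  intros -> HMN2.
  assert (Hswap : cd_mul v N2 M = cd_opp v (cd_mul v M N2)).
  { apply cd_ext; intro i; apply (f_equal (fun w => coord v w i)) in HMN2.
    unfold cd_anticomm in HMN2; rewrite coord_add, coord_zero in HMN2.
    rewrite coord_opp; lra. }
  unfold cd_anticomm.
  repeat rewrite ?cd_mul_addl, ?cd_mul_addr, ?cd_mul_scall, ?cd_mul_scalr,
    ?cd_mul_reall, ?cd_mul_realr.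
  rewrite Hswap; cd_linear.
Qed.

Theorem lemma12 (v : nat) (M N N1 N2 : CD v) :
  (2 <= v)%nat ->
  cd_imag v M -> cd_imag v N ->
  N = cd_add v N1 N2 ->
  (exists beta : R, N1 = cd_scal v beta M) ->
  cd_inner v M N2 = cd_zero v ->
  cd_anticomm v (cd_exp v M) (cd_exp v N) =
  cd_add v
    (cd_scal v (2 * cos (cd_norm v M)) (cd_exp v N))
    (cd_scal v (2 * sinc (cd_norm v M))
       (cd_mul v M
          (cd_add v (cd_real v (cos (cd_norm v N)))
                    (cd_scal v (sinc (cd_norm v N)) N1)))).
Proof.
  intros _ HM HN HNsplit [beta HN1] HMN2.
  assert (HN2 : cd_imag v N2).
  { apply (cd_imag_addr v N1); [rewrite HN1; apply cd_imag_scal | rewrite <- HNsplit];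
      assumption. }
  unfold cd_exp; rewrite HNsplit.
  apply cd_anticomm_affine with (beta := beta); [assumption|].
  apply cd_anticomm_orthogonal; assumption.
Qed.
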